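(* Let $R$ be a commutative ring of characteristic zero and $P \subseteq R$ a subsemiring (i.e. $P + P \subseteq P$, $PP \subseteq P$, $0, 1 \in P$). Suppose that there is $v \in P$ such that for every $a \in R$ there is $p \in \mathbb{N}[X]$ with $p(v) - a \in P$. Then for every $a \in R$, the following are equivalent: (1) $f(a) \geq 0$ for every ring homomorphism $f : R \to \mathbb{R}$ with $f(P) \subseteq \mathbb{R}_+$. (2) For every $r \in \mathbb{R}_+$ and $\varepsilon > 0$, there exist a polynomial $q \in \mathbb{N}[X]$, an element $w \in P$ and $n \in \mathbb{N}_{>0}$ such that $q(r) \leq \varepsilon n$ and $(1 + w)\,(n\,a + q(v)) \in P$.
   Context: $\mathbb{N}_{>0}$ denotes the positive integers; $q(v)$ denotes evaluation of $q$ at $v$ in $R$ and $q(r)$ evaluation at the real number $r$. *)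

From HB Require Import structures.
From mathcomp Require Import all_boot all_order all_algebra.
From mathcomp Require Export reals.
Set Implicit Arguments. Unset Strict Implicit. Unset Printing Implicit Defensive.
Import Order.TTheory GRing.Theory Num.Theory.
Local Open Scope ring_scope.

(* A polynomial in N[X] is represented by its coefficient list
   (p = [:: c_0; c_1; ...; c_d] means c_0 + c_1 X + ... + c_d X^d, c_i : nat).
   [neval p x] is its evaluation at x in any (commutative) semiring S,
   coefficients embedded via n%:R. *)
Definition neval (S : pzSemiRingType) (p : seq nat) (x : S) : S :=
  \sum_(i < size p) (nth 0%N p i)%:R * x ^+ i.

From HB Require Import structures.
From mathcomp Require Import all_boot all_order all_algebra.
From mathcomp Require Import reals.
From mathcomp Require Import boolp classical_sets.
From mathcomp Require Import ring lra.
Set Implicit Arguments.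
Unset Strict Implicit.
Unset Printing Implicit Defensive.
Import Order.TTheory GRing.Theory Num.Theory.
Local Open Scope ring_scope.

(* (2) => (1) is immediate: apply [f] to the certificate and let [eps] go to 0.
   For (1) => (2), pick [B] with [B(v) + a] in [P], put [j = size B + 1],
   [q = 1 + X^j], and [y = n a + q(v)] with [n] so large that [q(r) <= eps n].
   If [-1 = c - t y] with [c, t] in [P], then [(1 + t p) y] lies in [P] for any
   [p] in [P] with [p + y] in [P].  Otherwise [P - P y] is a proper P-module,
   contained by Zorn's lemma in a maximal one [M].  Maximality makes [M] total;
   since [n (B(v) + a) - y] lies in [M] and [deg B < j], [M] bounds [v], hence
   every [p(v)] with [p] in N[X], hence everything: [M] is archimedean.  Then
   [f x = sup {k/m | m x - k in M}] is a ring morphism to the reals which is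
   nonnegative on [M], so [0 <= f(-y) = - n f(a) - 1 - f(v)^j], contradicting
   [f(a) >= 0]. *)

Lemma neval_nil (S : pzSemiRingType) (x : S) : neval [::] x = 0.
Proof. by rewrite /neval big_ord0. Qed.

Lemma neval_cons (S : comPzSemiRingType) c s (x : S) :
  neval (c :: s) x = c%:R + x * neval s x.
Proof.
rewrite /neval /= big_ord_recl /= expr0 mulr1; congr (_ + _).
by rewrite mulr_sumr; apply: eq_bigr => i _; rewrite exprS mulrCA.
Qed.

Lemma rmorph_neval (S T : comPzSemiRingType) (f : {rmorphism S -> T}) q x :
  f (neval q x) = neval q (f x).
Proof.
elim: q => [|c s IH]; first by rewrite !neval_nil rmorph0.
by rewrite !neval_cons rmorphD rmorphM IH rmorph_nat.
Qed.

Lemma neval_natr (S : comPzSemiRingType) q (N : nat) :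
  neval q (N%:R : S) = (neval q N)%:R.
Proof.
elim: q => [|c s IH]; first by rewrite !neval_nil.
by rewrite !neval_cons IH natrD natrM natn.
Qed.

Definition one_plus_XS (k : nat) : seq nat := 1%N :: rcons (nseq k 0%N) 1%N.

Lemma neval_one_plus_XS (S : comPzSemiRingType) k (x : S) :
  neval (one_plus_XS k) x = 1 + x ^+ k.+1.
Proof.
have neval_Xn m : neval (rcons (nseq m 0%N) 1%N) x = x ^+ m.
  elim: m => [|m IH]; first by rewrite /= neval_cons neval_nil mulr0 addr0.
  by rewrite /= neval_cons IH add0r exprS.
by rewrite neval_cons neval_Xn exprS.
Qed.

Lemma exists_frac_between (F : archiRealFieldType) (s u : F) : s < u ->
  exists m : nat, exists k : int, (0 < m)%N /\ s < k%:~R / m%:R < u.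
Proof.
move=> su; have us_gt0 : 0 < u - s by rewrite subr_gt0.
set m := (Num.bound ((u - s)^-1)).+1.
have m_gt0 : 0 < m%:R :> F by rewrite ltr0n.
have hm : 1 < (u - s) * m%:R.
  rewrite -ltr_pdivrMl // mulr1; apply: (lt_le_trans (archi_boundP _)).
    by rewrite invr_ge0 ltW.
  by rewrite ler_nat.
exists m, (Num.floor (m%:R * s) + 1); split => //; apply/andP; split.
  by rewrite ltr_pdivlMr // mulrC floorD1_gt.
rewrite ltr_pdivrMr // intrD.
have := ltr_leD hm (floor_le (m%:R * s)).
by rewrite mulrBl addrC [s * _]mulrC subrK mulrC.
Qed.

Lemma ler_int_frac (F : numFieldType) (k k' : int) (m m' : nat) :
  (0 < m)%N -> (0 < m')%N -> (k' * m%:Z <= k * m'%:Z)%R ->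
  k'%:~R / m'%:R <= k%:~R / m%:R :> F.
Proof.
move=> m_gt0 m'_gt0 h.
rewrite ler_pdivrMr ?ltr0n // mulrAC ler_pdivlMr ?ltr0n //.
by rewrite -[m%:R]/((m%:Z)%:~R) -[m'%:R]/((m'%:Z)%:~R) -!intrM ler_int.
Qed.

Lemma exists_natr_ge_mul (F : archiRealFieldType) (c eps : F) : 0 <= c -> 0 < eps ->
  exists2 n : nat, (0 < n)%N & c <= eps * n%:R.
Proof.
move=> c_ge0 eps_gt0; exists (Num.bound (c / eps)).+1 => //.
rewrite mulrC -ler_pdivrMr //; apply: ltW; apply: (lt_le_trans (archi_boundP _)).
  exact: divr_ge0 (ltW eps_gt0).
by rewrite ler_nat.
Qed.

Lemma rmorph_ge0_of_certificates (R : comNzRingType) (rT : realType) (P : {pred R})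
    (f : {rmorphism R -> rT}) (v a : R) :
  (forall x, x \in P -> 0 <= f x) ->
  (forall eps : rT, 0 < eps -> exists q w n,
     [/\ w \in P, (0 < n)%N, neval q (f v) <= eps * n%:R
       & (1 + w) * (n%:R * a + neval q v) \in P]) ->
  0 <= f a.
Proof.
move=> f_ge0 Hcert; rewrite leNgt; apply/negP => fa_lt0.
have [q [w [n [wP n_gt0 q_le yP]]]] := Hcert (- f a / 2) (ltac:(lra)).
have := f_ge0 _ yP; rewrite rmorphM rmorphD rmorph1 rmorphD rmorphM rmorph_nat.
rewrite rmorph_neval pmulr_rge0; last by have := f_ge0 w wP; lra.
have n_pos : 0 < n%:R :> rT by rewrite ltr0n.
have : n%:R * f a < 0 by rewrite pmulr_rlt0.
move: q_le; rewrite mulrAC; lra.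
Qed.

Section Pmodules.
Variables (R : comNzRingType) (P : {pred R}).
Hypotheses (P0 : 0 \in P) (P1 : 1 \in P)
  (PD : forall x y, x \in P -> y \in P -> x + y \in P)
  (PM : forall x y, x \in P -> y \in P -> x * y \in P).

Local Open Scope classical_set_scope.

Lemma P_natr n : n%:R \in P.
Proof. by elim: n => [|n IH]; rewrite ?mulr0n // mulrS PD. Qed.

Lemma P_exprn x k : x \in P -> x ^+ k \in P.
Proof. by move=> xP; elim: k => [|k IH]; rewrite ?expr0 // exprS PM. Qed.

Lemma P_neval q x : x \in P -> neval q x \in P.
Proof.
move=> xP; elim: q => [|c s IH]; first by rewrite neval_nil.
by rewrite neval_cons PD ?PM // P_natr.
Qed.

Definition Pmodule (M : set R) : Prop :=
  [/\ forall x, x \in P -> M x,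
      forall x y, M x -> M y -> M (x + y)
    & forall p x, p \in P -> M x -> M (p * x)].

Definition proper_Pmodule (M : set R) : Prop := Pmodule M /\ ~ M (-1).

Definition module_adjoin (M : set R) (y : R) : set R :=
  [set x | exists c t, [/\ M c, t \in P & x = c + t * y]].

Section PmoduleTheory.
Variable M : set R.
Hypothesis Mmod : Pmodule M.

Lemma modP x : x \in P -> M x. Proof. by case: Mmod => + _ _; apply. Qed.

Lemma modD x y : M x -> M y -> M (x + y). Proof. by case: Mmod => _ + _; apply. Qed.

Lemma modM p x : p \in P -> M x -> M (p * x). Proof. by case: Mmod => _ _; apply. Qed.

Lemma modMn n x : M x -> M (n%:R * x). Proof. by apply: modM; apply: P_natr. Qed.

Lemma mod_neval_le q x y : x \in P -> y \in P -> M (y - x) ->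
  M (neval q y - neval q x).
Proof.
move=> xP yP Myx; elim: q => [|c s IH]; first by rewrite !neval_nil subrr; apply: modP.
have -> : neval (c :: s) y - neval (c :: s) x
    = y * (neval s y - neval s x) + neval s x * (y - x).
  by rewrite !neval_cons; ring.
by apply: modD; apply: modM => //; apply: P_neval.
Qed.

Lemma mod_exprn_ge1 u k : u \in P -> M (u - 1) -> M (u ^+ k - 1).
Proof.
move=> uP Mu1; elim: k => [|k IH]; first by rewrite expr0 subrr; apply: modP.
have -> : u ^+ k.+1 - 1 = u ^+ k * (u - 1) + (u ^+ k - 1) by rewrite exprS; ring.
by apply: modD => //; apply: modM => //; apply: P_exprn.
Qed.

Lemma mod_exprSn_ge u (N : nat) k : u \in P -> (0 < N)%N -> M (u - N%:R) ->
  M (u ^+ k.+1 - N%:R).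
Proof.
move=> uP N_gt0 MuN.
have Mu1 : M (u - 1).
  have -> : u - 1 = (u - N%:R) + N.-1%:R by rewrite -{1}(prednK N_gt0) mulrS; ring.
  by apply: modD => //; apply: modP; apply: P_natr.
have -> : u ^+ k.+1 - N%:R = u ^+ k * (u - N%:R) + N%:R * (u ^+ k - 1).
  by rewrite exprS; ring.
apply: modD; first by apply: modM => //; apply: P_exprn.
by apply: modMn; apply: mod_exprn_ge1.
Qed.

Lemma mod_neval_le_exprn u (N : nat) s j : u \in P -> (0 < N)%N -> M (u - N%:R) ->
  (size s <= j)%N -> M ((sumn s)%:R * u ^+ j - N%:R * neval s u).
Proof.
move=> uP N_gt0 MuN; elim: s j => [|c s IH] j sj.
  by rewrite neval_nil /= mul0r mulr0 subrr; apply: modP.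
case: j sj => // j sj.
have -> : (sumn (c :: s))%:R * u ^+ j.+1 - N%:R * neval (c :: s) u
    = c%:R * (u ^+ j.+1 - N%:R) + u * ((sumn s)%:R * u ^+ j - N%:R * neval s u).
  by rewrite neval_cons /= natrD exprS; ring.
apply: modD; first by apply: modMn; apply: mod_exprSn_ge.
by apply: modM => //; apply: IH.
Qed.

Lemma sub_module_adjoin y : M `<=` module_adjoin M y.
Proof. by move=> x Mx; exists x, 0; rewrite mul0r addr0. Qed.

Lemma module_adjoin_id y : module_adjoin M y y.
Proof. by exists 0, 1; rewrite add0r mul1r; split=> //; apply: modP. Qed.

Lemma Pmodule_adjoin y : Pmodule (module_adjoin M y).
Proof.
split.
- by move=> x xP; apply: sub_module_adjoin; apply: modP.
- move=> _ _ [c1 [t1 [Mc1 t1P ->]]] [c2 [t2 [Mc2 t2P ->]]].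
  by exists (c1 + c2), (t1 + t2); split; [apply: modD | apply: PD | ring].
- move=> p _ pP [c [t [Mc tP ->]]].
  by exists (p * c), (p * t); split; [apply: modM | apply: PM | ring].
Qed.

End PmoduleTheory.

Lemma Pmodule_P : Pmodule [set x | x \in P].
Proof. by split; [| exact: PD | exact: PM]. Qed.

Definition maximal_Pmodule (M : set R) : Prop :=
  proper_Pmodule M /\ forall M', proper_Pmodule M' -> M `<=` M' -> M' `<=` M.

Lemma proper_Pmodule_bigcup (F : set (set R)) : F !=set0 ->
  F `<=` proper_Pmodule -> total_on F subset -> proper_Pmodule (\bigcup_(X in F) X).
Proof.
move=> [X0 FX0] Fprop Ftot; have Fmod X : F X -> Pmodule X by move=> /Fprop[].
split; [split|].
- by move=> x xP; exists X0 => //; apply: modP (Fmod _ FX0) _ xP.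
- move=> x y [X FX Xx] [Y FY Yy]; have [XY|YX] := Ftot X Y FX FY.
    by exists Y => //; apply: modD (Fmod _ FY) _ _ (XY _ Xx) Yy.
  by exists X => //; apply: modD (Fmod _ FX) _ _ Xx (YX _ Yy).
- by move=> p x pP [X FX Xx]; exists X => //; apply: modM (Fmod _ FX) _ _ pP Xx.
- by move=> [X FX XN1]; have [_] := Fprop X FX.
Qed.

Lemma exists_maximal_Pmodule M0 : proper_Pmodule M0 ->
  exists2 M, maximal_Pmodule M & M0 `<=` M.
Proof.
move=> M0prop.
pose T := {M : set R | proper_Pmodule M /\ M0 `<=` M}.
pose le (X Y : T) := `[< sval X `<=` sval Y >].
have chain_ub (A : set T) : total_on A le -> exists U, forall X, A X -> le X U.
  move=> Atot; pose F := [set sval X | X in A] `|` [set M0].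
  have M0F X : F X -> M0 `<=` X by case=> [[Y _ <-]|->]; [case: (svalP Y) |].
  have Fprop : F `<=` proper_Pmodule by move=> X [[Y _ <-]|->]; [case: (svalP Y) |].
  have Ftot : total_on F subset.
    move=> _ _ [[X AX <-]|->] [[Y AY <-]|->]; last by left.
    - by have [/asboolP|/asboolP] := Atot X Y AX AY; [left|right].
    - by right; apply: M0F; left; exists X.
    - by left; apply: M0F; left; exists Y.
  have Uprop := proper_Pmodule_bigcup (ex_intro _ M0 (or_intror erefl)) Fprop Ftot.
  have M0U : M0 `<=` \bigcup_(X in F) X by apply: bigcup_sup; right.
  exists (exist _ _ (conj Uprop M0U) : T) => X AX.
  by apply/asboolP => x Xx; exists (sval X) => //; left; exists X.
have [|X Y Z||[M [Mprop M0M]] Mmax] :=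
  @ZL_preorder T (exist _ M0 (conj M0prop (@subset_refl _ M0))) le.
- by move=> X; apply/asboolP.
- by move=> /asboolP XY /asboolP YZ; apply/asboolP; apply: subset_trans YZ.
- exact: chain_ub.
exists M => //; split=> // M' M'prop MM'.
have := Mmax (exist _ M' (conj M'prop (subset_trans M0M MM'))).
by move=> /(_ (asboolT MM')) /asboolP.
Qed.

Hypothesis P_cofinal : forall x, exists2 p, p \in P & p - x \in P.

Lemma mod_support_mul M x z : Pmodule M -> M z -> M (- z) -> M (x * z).
Proof.
move=> Mmod Mz MNz; have [p pP pxP] := P_cofinal x.
have -> : x * z = p * z + (p - x) * (- z) by ring.
by apply: modD => //; apply: modM.
Qed.

Lemma certificate_of_adjoin_N1 y : module_adjoin [set x | x \in P] (- y) (-1) ->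
  exists2 w, w \in P & (1 + w) * y \in P.
Proof.
case=> c [t [cP tP e]]; have [p pP pyP] := P_cofinal (- y).
exists (t * p); first exact: PM.
have -> : (1 + t * p) * y = (p - - y) + p * c - p * (c + t * - y + 1) by ring.
by rewrite -e addNr mulr0 subr0; apply: PD => //; apply: PM.
Qed.

Section Representation.
Variables (rT : realType) (M : set R).
Hypotheses (Mmod : Pmodule M) (MN1 : ~ M (-1))
  (Mtot : forall x, M x \/ M (- x))
  (March : forall x, exists N : nat, M (N%:R - x)).

Lemma mod_int_ge0 (k : int) : M k%:~R -> (0 <= k)%R.
Proof.
case: k => // n; rewrite NegzE mulrNz => MNn; exfalso; apply: MN1.
have -> : -1 = - n.+1%:R + n%:R :> R by rewrite -addn1 natrD; ring.
by apply: modD => //; apply: modP => //; apply: P_natr.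
Qed.

Definition lower_fracs (x : R) : set rT :=
  [set z | exists m : nat, exists k : int,
     [/\ (0 < m)%N, z = k%:~R / m%:R & M (m%:R * x - k%:~R)]].

Definition rep (x : R) : rT := sup (lower_fracs x).

Lemma lower_fracs_ub x (m : nat) (k : int) : (0 < m)%N ->
  M (k%:~R - m%:R * x) -> ubound (lower_fracs x) (k%:~R / m%:R).
Proof.
move=> m_gt0 Mkx _ [m' [k' [m'_gt0 -> Mk'x]]].
apply: ler_int_frac => //; rewrite -subr_ge0; apply: mod_int_ge0.
have -> : (k * m'%:Z - k' * m%:Z)%:~R
    = m'%:R * (k%:~R - m%:R * x) + m%:R * (m'%:R * x - k'%:~R) :> R.
  by rewrite intrD intrN !intrM -[m%:R]/((m%:Z)%:~R) -[m'%:R]/((m'%:Z)%:~R); ring.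
by apply: modD => //; apply: modMn.
Qed.

Lemma lower_fracs_neq0 x : lower_fracs x !=set0.
Proof.
have [N MNx] := March (- x).
exists ((- N%:Z)%:~R / 1%:R), 1%N, (- N%:Z); split => //.
by rewrite mul1r intrN opprK addrC; rewrite opprK in MNx.
Qed.

Lemma has_sup_lower_fracs x : has_sup (lower_fracs x).
Proof.
split; first exact: lower_fracs_neq0.
have [N MNx] := March x.
by exists ((N%:Z)%:~R / 1%:R); apply: lower_fracs_ub; rewrite ?mul1r.
Qed.

Lemma rep_ge_frac x (m : nat) (k : int) : (0 < m)%N ->
  M (m%:R * x - k%:~R) -> k%:~R / m%:R <= rep x.
Proof.
by move=> m_gt0 Mxk; apply: sup_upper_bound; [apply: has_sup_lower_fracs | exists m, k].
Qed.

Lemma rep_le_frac x (m : nat) (k : int) : (0 < m)%N ->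
  M (k%:~R - m%:R * x) -> rep x <= k%:~R / m%:R.
Proof.
by move=> m_gt0 Mkx; apply: ge_sup; [apply: lower_fracs_neq0 | apply: lower_fracs_ub].
Qed.

Lemma rep_ge0 x : M x -> 0 <= rep x.
Proof. by move=> Mx; have := @rep_ge_frac x 1 0; rewrite mul0r mul1r subr0; apply. Qed.

Lemma rep1 : rep 1 = 1.
Proof.
have M_0 : M 0 by apply: modP.
apply/eqP; rewrite eq_le.
have := @rep_le_frac 1 1 1; have := @rep_ge_frac 1 1 1.
by rewrite !divr1 mulr1 subrr => -> // ->.
Qed.

Lemma rep0 : rep 0 = 0.
Proof.
have M_0 : M 0 by apply: modP.
apply/eqP; rewrite eq_le rep_ge0 // andbT.
by have := @rep_le_frac 0 1 0; rewrite mul0r mulr0 subr0; apply.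
Qed.

Lemma ler_repD x y : rep x + rep y <= rep (x + y).
Proof.
have sum_le z z' : lower_fracs x z -> lower_fracs y z' -> z + z' <= rep (x + y).
  move=> [m [k [m_gt0 -> Mxk]]] [m' [k' [m'_gt0 -> Myk']]].
  have m_neq0 : (m%:R : rT) != 0 by rewrite pnatr_eq0 -lt0n.
  have m'_neq0 : (m'%:R : rT) != 0 by rewrite pnatr_eq0 -lt0n.
  have -> : k%:~R / m%:R + k'%:~R / m'%:R
      = (k * m'%:Z + k' * m%:Z)%:~R / (m * m')%:R :> rT.
    rewrite intrD !intrM -[m%:R]/((m%:Z)%:~R) -[m'%:R]/((m'%:Z)%:~R) natrM.
    by field; rewrite m_neq0 m'_neq0.
  apply: rep_ge_frac; first by rewrite muln_gt0 m_gt0.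
  have -> : (m * m')%:R * (x + y) - (k * m'%:Z + k' * m%:Z)%:~R
      = m'%:R * (m%:R * x - k%:~R) + m%:R * (m'%:R * y - k'%:~R) :> R.
    rewrite intrD !intrM -[m%:R]/((m%:Z)%:~R) -[m'%:R]/((m'%:Z)%:~R) natrM; ring.
  by apply: modD => //; apply: modMn.
rewrite addrC -lerBrDr; apply: ge_sup; first exact: lower_fracs_neq0.
move=> z' Myz'; rewrite lerBrDl -lerBrDr; apply: ge_sup; first exact: lower_fracs_neq0.
by move=> z Mxz; rewrite lerBrDr; apply: sum_le.
Qed.

Lemma repN x : rep (- x) = - rep x.
Proof.
apply/eqP; rewrite -subr_eq0 opprK eq_le; apply/andP; split.
  by have := ler_repD x (- x); rewrite subrr rep0 addrC.
rewrite leNgt; apply/negP => lt0.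
(* A fraction strictly between [rep x] and [- rep (- x)] would lie on neither
   side of [x] in the total order defined by [M]. *)
have lt_rep : rep x < - rep (- x) by lra.
have [m [k [m_gt0 /andP[lt_x lt_Nx]]]] := exists_frac_between lt_rep.
case: (Mtot (m%:R * x - k%:~R)) => [/(rep_ge_frac m_gt0)|MNxk].
  by rewrite leNgt lt_x.
have : M (m%:R * (- x) - (- k)%:~R) by rewrite intrN mulrN opprK addrC -opprB.
move=> /(rep_ge_frac m_gt0); rewrite intrN mulNr lerNl leNgt.
by rewrite lt_Nx.
Qed.

Lemma repD x y : rep (x + y) = rep x + rep y.
Proof.
apply/eqP; rewrite eq_le ler_repD andbT.
by have := ler_repD (x + y) (- y); rewrite addrK repN lerBlDr.
Qed.

Lemma repB x y : rep (x - y) = rep x - rep y.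
Proof. by rewrite repD repN. Qed.

HB.instance Definition _ := GRing.isZmodMorphism.Build R rT rep repB.

Lemma ler_rep_PM p y : p \in P -> rep p * rep y <= rep (p * y).
Proof.
move=> pP; have rep_p_ge0 : 0 <= rep p by apply: rep_ge0; apply: modP.
have frac_le z : lower_fracs y z -> z * rep p <= rep (p * y).
  case=> m [k [m_gt0 -> Myk]].
  have := rep_ge0 (modM Mmod pP Myk).
  have -> : p * (m%:R * y - k%:~R) = (p * y) *+ m - p *~ k by ring.
  rewrite raddfB raddfMn raddfMz subr_ge0 mulrAC ler_pdivrMr ?ltr0n //.
  by rewrite mulrzl mulr_natr.
have [rep_p0 | rep_p_neq0] := eqVneq (rep p) 0.
  have [z yz] := lower_fracs_neq0 y.
  by rewrite rep_p0 mul0r; have := frac_le z yz; rewrite rep_p0 mulr0.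
have rep_p_gt0 : 0 < rep p by rewrite lt_neqAle eq_sym rep_p_neq0.
rewrite -ler_pdivlMl //; apply: ge_sup; first exact: lower_fracs_neq0.
by move=> z yz; rewrite ler_pdivlMl // mulrC; apply: frac_le.
Qed.

Lemma rep_PM p y : p \in P -> rep (p * y) = rep p * rep y.
Proof.
move=> pP; apply/eqP; rewrite eq_le ler_rep_PM // andbT.
by have := ler_rep_PM (- y) pP; rewrite mulrN !repN mulrN lerN2.
Qed.

Lemma repM x y : rep (x * y) = rep x * rep y.
Proof.
have [p pP pxP] := P_cofinal x.
have -> : x * y = p * y - (p - x) * y by ring.
by rewrite repB !rep_PM // repB; ring.
Qed.

HB.instance Definition _ := GRing.isMonoidMorphism.Build R rT rep (conj rep1 repM).

Lemma exists_rmorph_ge0 : exists f : {rmorphism R -> rT}, forall x, M x -> 0 <= f x.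
Proof. by exists rep; apply: rep_ge0. Qed.

End Representation.

Section MaximalPmodule.
Variable M : set R.
Hypothesis Mmax : maximal_Pmodule M.

Lemma maximal_Pmodule_adjoin y : ~ M y -> module_adjoin M y (-1).
Proof.
move=> NMy; apply: contrapT => NadjN1; apply: NMy.
have [[Mmod _] Mle] := Mmax.
apply: (Mle (module_adjoin M y)); last exact: module_adjoin_id.
  by split=> //; apply: Pmodule_adjoin.
exact: sub_module_adjoin.
Qed.

Lemma maximal_Pmodule_total x : M x \/ M (- x).
Proof.
have [[Mmod MN1] _] := Mmax.
apply: contrapT => /not_orP[NMx NMNx].
have [c1 [t1 [Mc1 t1P e1]]] := maximal_Pmodule_adjoin NMx.
have [c2 [t2 [Mc2 t2P e2]]] := maximal_Pmodule_adjoin NMNx.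
(* [t2 c1 + t1 c2 = - (t1 + t2)], so [t1] lies in the support of [M]. *)
have MNt1 : M (- t1).
  have -> : - t1 = t2 + (t2 * c1 + t1 * c2).
    have -> : c1 = -1 - t1 * x by rewrite e1 addrK.
    have -> : c2 = -1 - t2 * - x by rewrite e2 addrK.
    by ring.
  by apply: (modD Mmod); [apply: (modP Mmod) | apply: (modD Mmod); apply: (modM Mmod)].
apply: MN1; rewrite e1 mulrC; apply: (modD Mmod) => //.
by apply: mod_support_mul => //; apply: (modP Mmod).
Qed.

End MaximalPmodule.

Section Generator.
Variable v : R.
Hypotheses (vP : v \in P) (hv : forall a, exists p, neval p v - a \in P).

Lemma mod_archimedean M (N : nat) : Pmodule M -> M (N%:R - v) ->
  forall x, exists K : nat, M (K%:R - x).
Proof.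
move=> Mmod MNv x; have [p pvx] := hv x.
exists (neval p N); rewrite -neval_natr.
have -> : neval p N%:R - x = (neval p N%:R - neval p v) + (neval p v - x) by ring.
apply: (modD Mmod); last exact: (modP Mmod).
by apply: (mod_neval_le Mmod) => //; apply: P_natr.
Qed.

Lemma mod_generator_bounded M n B : Pmodule M -> ~ M (-1) ->
  (forall x, M x \/ M (- x)) -> M (n%:R * neval B v - (1 + v ^+ (size B).+1)) ->
  exists N : nat, M (N%:R - v).
Proof.
move=> Mmod MN1 Mtot MB; apply: contrapT => v_unbounded.
(* Once [v >= N > n * sumn B], [v^(size B + 1)] dominates [n B(v)], whereas [MB]
   says [1 + v^(size B + 1) <= n B(v)]. *)
pose N := (n * sumn B).+1.
have MvN : M (v - N%:R).
  have [MNv|] := Mtot (N%:R - v); last by rewrite opprB.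
  by case: v_unbounded; exists N.
apply: MN1.
have -> : -1 = n%:R * ((sumn B)%:R * v ^+ (size B).+1 - N%:R * neval B v)
    + N%:R * (n%:R * neval B v - (1 + v ^+ (size B).+1))
    + v ^+ (size B).+1 + (n * sumn B)%:R.
  by rewrite /N mulrS natrM; ring.
apply: (modD Mmod); last by apply: (modP Mmod); apply: P_natr.
apply: (modD Mmod); last by apply: (modP Mmod); apply: P_exprn.
apply: (modD Mmod); last exact: (modMn Mmod).
by apply: (modMn Mmod); apply: (mod_neval_le_exprn Mmod).
Qed.

Lemma exists_rmorph_ge0_on (rT : realType) M0 n B : proper_Pmodule M0 ->
  M0 (n%:R * neval B v - (1 + v ^+ (size B).+1)) ->
  exists f : {rmorphism R -> rT}, forall x, M0 x -> 0 <= f x.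
Proof.
move=> M0prop M0B; have [M Mmax M0M] := exists_maximal_Pmodule M0prop.
have [[Mmod MN1] _] := Mmax; have Mtot := maximal_Pmodule_total Mmax.
have [N MNv] := mod_generator_bounded Mmod MN1 Mtot (M0M _ M0B).
have [f f_ge0] := exists_rmorph_ge0 rT Mmod MN1 Mtot (mod_archimedean Mmod MNv).
by exists f => x /M0M; apply: f_ge0.
Qed.

Lemma certificate_of_rmorph_ge0 (rT : realType) a n B :
  (forall f : {rmorphism R -> rT}, (forall x, x \in P -> 0 <= f x) -> 0 <= f a) ->
  neval B v + a \in P ->
  exists2 w, w \in P & (1 + w) * (n%:R * a + neval (one_plus_XS (size B)) v) \in P.
Proof.
move=> a_ge0 Ba; set y := _ + _.
pose M0 := module_adjoin [set x | x \in P] (- y).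
have [M0N1|M0N1] := pselect (M0 (-1)); first exact: certificate_of_adjoin_N1.
have M0prop : proper_Pmodule M0 by split=> //; apply: Pmodule_adjoin Pmodule_P _.
have M0B : M0 (n%:R * neval B v - (1 + v ^+ (size B).+1)).
  exists (n%:R * (neval B v + a)), 1; split=> //; first by apply: PM => //; apply: P_natr.
  by rewrite /y neval_one_plus_XS; ring.
have [f f_ge0] := exists_rmorph_ge0_on rT M0prop M0B.
have f_Pge0 x : x \in P -> 0 <= f x by move=> xP; apply: f_ge0; apply: sub_module_adjoin.
exfalso; have := f_ge0 _ (module_adjoin_id Pmodule_P (- y)).
rewrite /y rmorphN rmorphD rmorphM rmorph_nat rmorph_neval neval_one_plus_XS.
have := mulr_ge0 (ler0n rT n) (a_ge0 f f_Pge0).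
have := exprn_ge0 (size B).+1 (f_Pge0 v vP); lra.
Qed.

End Generator.
End Pmodules.

Theorem theorem4p4 (R : comNzRingType) (rT : realType) (P : {pred R})
  (charR0 : forall n : nat, n%:R = 0 :> R -> n = 0%N)
  (P0 : 0 \in P) (P1 : 1 \in P)
  (PD : forall x y, x \in P -> y \in P -> x + y \in P)
  (PM : forall x y, x \in P -> y \in P -> x * y \in P)
  (v : R) (vP : v \in P)
  (hv : forall a : R, exists p : seq nat, neval p v - a \in P)
  (a : R) :
  (forall f : {rmorphism R -> rT}, (forall x, x \in P -> 0 <= f x) -> 0 <= f a)
  <->
  (forall r : rT, 0 <= r -> forall eps : rT, 0 < eps ->
     exists q : seq nat, exists w : R, exists n : nat,
       [/\ w \in P, (0 < n)%N, neval q r <= eps * n%:R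
         & (1 + w) * (n%:R * a + neval q v) \in P]).
Proof.
have P_cofinal x : exists2 p, p \in P & p - x \in P.
  by have [q qP] := hv x; exists (neval q v) => //; apply: P_neval.
split=> [a_ge0 r r_ge0 eps eps_gt0 | Hcert f f_ge0].
  have [B] := hv (- a); rewrite opprK => Ba.
  have r_pow_ge0 : 0 <= 1 + r ^+ (size B).+1 by rewrite addr_ge0 ?exprn_ge0.
  have [n n_gt0 r_le] := exists_natr_ge_mul r_pow_ge0 eps_gt0.
  have [w wP yP] :=
    certificate_of_rmorph_ge0 P0 P1 PD PM P_cofinal vP hv n a_ge0 Ba.
  by exists (one_plus_XS (size B)), w, n; rewrite neval_one_plus_XS.
apply: (rmorph_ge0_of_certificates f_ge0) => eps eps_gt0.
exact: Hcert _ (f_ge0 _ vP) _ eps_gt0.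
Qed.
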